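(* For every integer $n\ge0$ there are constants $C_n$ and $D_n$ (independent of $s$) such that for all real $s>-1$ \[ \int_0^1 P_{n,n}(x)x^s\,dx=C_n\frac{(-s)_n}{(\frac12+\frac s2)_{n+1}},\qquad \int_0^1\bigl[P_{n+1,n}(x)+P_{n,n+1}(x)\bigr]x^s\,dx=D_n\frac{(-s)_n}{(1+\frac s2)_{n+1}}. \]
   Context: Pochhammer symbol: $(a)_0=1$, $(a)_n=a(a+1)\cdots(a+n-1)$. Type II Legendre–Angelesco polynomials: for $n,m\ge0$, $P_{n,m}$ is the unique monic polynomial of degree $n+m$ with $\int_{-1}^0 P_{n,m}(x)x^k\,dx=0$ for $0\le k\le n-1$ and $\int_0^1 P_{n,m}(x)x^k\,dx=0$ for $0\le k\le m-1$. *)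

From Stdlib Require Import Reals List.
Open Scope R_scope.

Fixpoint poch (a : R) (n : nat) : R :=
  match n with
  | O => 1
  | S k => poch a k * (a + INR k)
  end.

(* A real polynomial is represented by its coefficient list [c0; c1; ...; cd]
   (ascending powers); evaluation by Horner's scheme. *)
Definition peval (p : list R) (x : R) : R :=
  fold_right (fun c acc => c + x * acc) 0 p.

Definition IntegralIs (f : R -> R) (a b L : R) : Prop :=
  exists pr : Riemann_integrable f a b, RiemannInt pr = L.

Definition ImproperIntegralIs (f : R -> R) (a b L : R) : Prop :=
  (forall e, a < e <= b -> inhabited (Riemann_integrable f e b)) /\
  (forall eps, eps > 0 -> exists delta, delta > 0 /\
     forall e, a < e < a + delta -> e <= b ->
       forall pr : Riemann_integrable f e b, Rabs (RiemannInt pr - L) < eps).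

(* p (coefficient list) is the type II Legendre–Angelesco polynomial P_{n,m}:
   monic of degree n+m, orthogonal to x^k on [-1,0] for k < n and
   on [0,1] for k < m. *)
Definition is_LA (n m : nat) (p : list R) : Prop :=
  length p = (n + m + 1)%nat /\
  last p 0 = 1 /\
  (forall k, (k < n)%nat -> IntegralIs (fun x => peval p x * x ^ k) (-1) 0 0) /\
  (forall k, (k < m)%nat -> IntegralIs (fun x => peval p x * x ^ k) 0 1 0).

From Stdlib Require Import Reals List Lia Lra FunctionalExtensionality Classical.
From Coquelicot Require Import Coquelicot.
Open Scope R_scope.

(* For a polynomial with coefficients c_i one has
   int_0^1 p(x) x^s dx = M_c(s) := sum_i c_i / (s + i + 1), and the conditions on [0,1]
   and on [-1,0] say that M_c and M_c' vanish at s = 0, 1, ..., where c'_i = (-1)^i c_i.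
   The key algebraic fact is that a partial fraction sum_{j<N} e_j / (s + a_j) with distinct
   poles and N integer zeros 0, ..., N-1 is identically zero, while with only N-1 such zeros
   it is a multiple of (s)(s-1)...(s-N+2) / prod_j (s + a_j).
   For P_{n,n} the two families of conditions coincide, which forces the odd part of c to
   vanish: M_c then has the poles s+1, s+3, ..., s+2n+1 and zeros 0, ..., n-1.  For the pair
   P_{n+1,n}, P_{n,n+1} with coefficients c, e, the same argument gives c_i = -(-1)^i e_i, so
   c + e is odd and M_{c+e} has the poles s+2, ..., s+2n+2 and zeros 0, ..., n-1.  In both
   cases the argument also shows the coefficients are unique, so the constant does not
   depend on the polynomials. *)

(** * Finite sums and products *)

Fixpoint sumR (f : nat -> R) (N : nat) : R :=
  match N with O => 0 | S k => sumR f k + f k end.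

Fixpoint prodR (f : nat -> R) (N : nat) : R :=
  match N with O => 1 | S k => prodR f k * f k end.

Lemma sumR_ext f g N : (forall i, (i < N)%nat -> f i = g i) -> sumR f N = sumR g N.
Proof.
  induction N as [|N IH]; intros H; simpl; [reflexivity|].
  rewrite IH by (intros; apply H; lia); rewrite H by lia; reflexivity.
Qed.

Lemma sumR_plus f g N : sumR (fun i => f i + g i) N = sumR f N + sumR g N.
Proof. induction N as [|N IH]; simpl; [ring|rewrite IH; ring]. Qed.

Lemma sumR_minus f g N : sumR (fun i => f i - g i) N = sumR f N - sumR g N.
Proof. induction N as [|N IH]; simpl; [ring|rewrite IH; ring]. Qed.

Lemma sumR_mult_r f c N : sumR (fun i => f i * c) N = sumR f N * c.
Proof. induction N as [|N IH]; simpl; [ring|rewrite IH; ring]. Qed.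

Lemma sumR_eq0 f N : (forall i, (i < N)%nat -> f i = 0) -> sumR f N = 0.
Proof.
  induction N as [|N IH]; intros H; simpl; [reflexivity|].
  rewrite IH by (intros; apply H; lia); rewrite H by lia; ring.
Qed.

Lemma sumR_shift f N : sumR f (S N) = f O + sumR (fun i => f (S i)) N.
Proof. induction N as [|N IH]; [simpl; ring|]; cbn [sumR] in *; rewrite IH; ring. Qed.

Lemma sumR_trunc f N M :
  (N <= M)%nat -> (forall i, (N <= i)%nat -> f i = 0) -> sumR f M = sumR f N.
Proof.
  intros HNM H; induction HNM as [|M HNM IH]; [reflexivity|].
  simpl; rewrite IH, H by lia; ring.
Qed.

Lemma sumR_single f N j :
  (j < N)%nat -> (forall i, (i < N)%nat -> i <> j -> f i = 0) -> sumR f N = f j.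
Proof.
  induction N as [|N IH]; intros Hj H; [lia|simpl].
  destruct (Nat.eq_dec j N) as [->|Hne].
  - rewrite sumR_eq0; [ring|intros i Hi; apply H; lia].
  - rewrite IH, (H N) by (lia || (intros i Hi Hij; apply H; lia)); ring.
Qed.

Lemma sumR_split_parity f M :
  sumR f (2 * M) = sumR (fun j => f (2 * j)%nat) M + sumR (fun j => f (2 * j + 1)%nat) M.
Proof.
  induction M as [|M IH]; [simpl; ring|].
  replace (2 * S M)%nat with (S (S (2 * M))) by lia.
  change (sumR f (S (S (2 * M)))) with (sumR f (2 * M) + f (2 * M)%nat + f (S (2 * M))).
  rewrite IH; cbn [sumR]; replace (2 * M + 1)%nat with (S (2 * M)) by lia; ring.
Qed.

Lemma sumR_abs_le f g N :
  (forall i, (i < N)%nat -> Rabs (f i) <= g i) -> Rabs (sumR f N) <= sumR g N.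
Proof.
  induction N as [|N IH]; intros H; simpl; [rewrite Rabs_R0; lra|].
  eapply Rle_trans; [apply Rabs_triang|].
  apply Rplus_le_compat; [apply IH; intros; apply H; lia|apply H; lia].
Qed.

Lemma prodR_ext f g N : (forall i, (i < N)%nat -> f i = g i) -> prodR f N = prodR g N.
Proof.
  induction N as [|N IH]; intros H; simpl; [reflexivity|].
  rewrite IH by (intros; apply H; lia); rewrite H by lia; reflexivity.
Qed.

Lemma prodR_eq0 f N j : (j < N)%nat -> f j = 0 -> prodR f N = 0.
Proof.
  induction N as [|N IH]; intros Hj Hf; [lia|simpl].
  destruct (Nat.eq_dec j N) as [->|Hne]; [rewrite Hf|rewrite IH by (auto || lia)]; ring.
Qed.

Lemma prodR_neq0 f N : (forall i, (i < N)%nat -> f i <> 0) -> prodR f N <> 0.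
Proof.
  induction N as [|N IH]; intros H; simpl; [lra|].
  apply Rmult_integral_contrapositive_currified; [apply IH; intros|]; apply H; lia.
Qed.

Lemma prodR_drop f N j :
  (j < N)%nat -> prodR (fun i => if Nat.eqb i j then 1 else f i) N * f j = prodR f N.
Proof.
  induction N as [|N IH]; intros Hj; [lia|simpl].
  destruct (Nat.eq_dec j N) as [->|Hne].
  - rewrite Nat.eqb_refl, (prodR_ext _ f); [ring|].
    intros i Hi; destruct (Nat.eqb_spec i N); [lia|reflexivity].
  - destruct (Nat.eqb_spec N j); [lia|]. rewrite <- IH by lia; ring.
Qed.

(** * Polynomial functions *)

Fixpoint ladd (u v : list R) : list R :=
  match u, v with
  | nil, _ => v
  | _, nil => u
  | a :: u', b :: v' => (a + b) :: ladd u' v'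
  end.

Lemma peval_ladd u v x : peval (ladd u v) x = peval u x + peval v x.
Proof.
  revert v; induction u as [|a u IH]; intros [|b v]; simpl; try ring.
  rewrite IH; ring.
Qed.

Lemma length_ladd u v : length (ladd u v) = Nat.max (length u) (length v).
Proof. revert v; induction u as [|a u IH]; intros [|b v]; simpl; auto. Qed.

Lemma peval_scale r q x : peval (map (Rmult r) q) x = r * peval q x.
Proof. induction q as [|a q IH]; simpl; [|rewrite IH]; ring. Qed.

Definition ispoly (d : nat) (f : R -> R) : Prop :=
  exists q, (length q <= d)%nat /\ forall x, f x = peval q x.

Lemma ispoly_ext d f g : (forall x, f x = g x) -> ispoly d f -> ispoly d g.
Proof. intros H [q [Hq Hf]]; exists q; split; [|intros; rewrite <- H]; auto. Qed.

Lemma ispoly_zero d : ispoly d (fun _ => 0).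
Proof. exists nil; split; simpl; [lia|reflexivity]. Qed.

Lemma ispoly_const c : ispoly 1 (fun _ => c).
Proof. exists (c :: nil); split; simpl; [lia|intros; ring]. Qed.

Lemma ispoly_plus d f g : ispoly d f -> ispoly d g -> ispoly d (fun x => f x + g x).
Proof.
  intros [q [Hq Hf]] [r [Hr Hg]]; exists (ladd q r); split.
  - rewrite length_ladd; lia.
  - intros x; rewrite peval_ladd, Hf, Hg; reflexivity.
Qed.

Lemma ispoly_scal d c f : ispoly d f -> ispoly d (fun x => c * f x).
Proof.
  intros [q [Hq Hf]]; exists (map (Rmult c) q); split.
  - rewrite length_map; exact Hq.
  - intros x; rewrite peval_scale, Hf; reflexivity.
Qed.

Lemma ispoly_mul_lin d f a : ispoly d f -> ispoly (S d) (fun x => f x * (x + a)).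
Proof.
  intros [q [Hq Hf]]; exists (ladd (map (Rmult a) q) (0 :: q)); split.
  - rewrite length_ladd, length_map; simpl; lia.
  - intros x; rewrite peval_ladd, peval_scale, Hf; simpl; ring.
Qed.

Lemma ispoly_sumR d F N :
  (forall j, (j < N)%nat -> ispoly d (F j)) -> ispoly d (fun x => sumR (fun j => F j x) N).
Proof.
  induction N as [|N IH]; intros H; simpl; [apply ispoly_zero|].
  apply ispoly_plus; [apply IH; intros|]; apply H; lia.
Qed.

Lemma ispoly_prodR a N : ispoly (S N) (fun x => prodR (fun i => x + a i) N).
Proof. induction N as [|N IH]; simpl; [apply ispoly_const|apply ispoly_mul_lin, IH]. Qed.

Lemma ispoly_prodR_drop a N j :
  (j < N)%nat -> ispoly N (fun x => prodR (fun i => if Nat.eqb i j then 1 else x + a i) N).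
Proof.
  induction N as [|N IH]; intros Hj; [lia|simpl].
  destruct (Nat.eq_dec j N) as [->|Hne].
  - rewrite Nat.eqb_refl; apply (ispoly_ext _ (fun x => prodR (fun i => x + a i) N)).
    + intros x; rewrite Rmult_1_r; apply prodR_ext.
      intros i Hi; destruct (Nat.eqb_spec i N); [lia|reflexivity].
    + apply ispoly_prodR.
  - destruct (Nat.eqb_spec N j); [lia|]; apply ispoly_mul_lin, IH; lia.
Qed.

Lemma peval_factor q r : exists q', (length q' <= length q - 1)%nat /\
  forall x, peval q x = peval q r + (x - r) * peval q' x.
Proof.
  induction q as [|a q [q1 [Hl He]]].
  - exists nil; split; simpl; [lia|intros; ring].
  - exists (ladd q (map (Rmult r) q1)); split.
    + rewrite length_ladd, length_map; simpl; lia.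
    + intros x; simpl; rewrite peval_ladd, peval_scale, (He x); ring.
Qed.

Lemma ispoly_eq0_of_roots d f :
  ispoly d f -> (forall k, (k < d)%nat -> f (INR k) = 0) -> forall x, f x = 0.
Proof.
  revert f; induction d as [|d IH]; intros f [q [Hq Hf]] Hr x.
  - destruct q; simpl in Hq; [rewrite Hf; reflexivity|lia].
  - destruct (peval_factor q (INR d)) as [q' [Hl He]].
    assert (Hd : peval q (INR d) = 0) by (rewrite <- Hf; apply Hr; lia).
    assert (Hq' : forall y, peval q' y = 0).
    { apply IH; [exists q'; split; [lia|reflexivity]|].
      intros k Hk; specialize (Hr k ltac:(lia)); rewrite Hf, He, Hd, Rplus_0_l in Hr.
      assert (INR k < INR d) by (apply lt_INR; lia).
      apply Rmult_integral in Hr; destruct Hr; [lra|assumption]. }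
    rewrite Hf, He, Hq', Hd; ring.
Qed.

(** * Partial fractions *)

Definition pf_numer (a e : nat -> R) (N : nat) (x : R) : R :=
  sumR (fun j => e j * prodR (fun i => if Nat.eqb i j then 1 else x + a i) N) N.

Lemma pf_numer_eq a e N x : (forall i, (i < N)%nat -> x + a i <> 0) ->
  pf_numer a e N x = sumR (fun j => e j / (x + a j)) N * prodR (fun i => x + a i) N.
Proof.
  intros H; unfold pf_numer; rewrite <- sumR_mult_r; apply sumR_ext; intros j Hj.
  rewrite <- (prodR_drop (fun i => x + a i) N j Hj); field; auto.
Qed.

Lemma ispoly_pf_numer a e N : ispoly N (pf_numer a e N).
Proof.
  apply (ispoly_sumR N (fun j x => e j * prodR (fun i => if Nat.eqb i j then 1 else x + a i) N)).
  intros j Hj; apply ispoly_scal, ispoly_prodR_drop, Hj.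
Qed.

Lemma partial_fraction_coef_eq0 a e N :
  (forall i j, (i < N)%nat -> (j < N)%nat -> a i = a j -> i = j) ->
  (forall k j, (k < N)%nat -> (j < N)%nat -> INR k + a j <> 0) ->
  (forall k, (k < N)%nat -> sumR (fun j => e j / (INR k + a j)) N = 0) ->
  forall j, (j < N)%nat -> e j = 0.
Proof.
  intros Hinj Hpole H.
  assert (Hnum : forall x, pf_numer a e N x = 0).
  { apply (ispoly_eq0_of_roots N); [apply ispoly_pf_numer|].
    intros k Hk; rewrite pf_numer_eq, H by auto; ring. }
  intros j Hj; specialize (Hnum (- a j)); unfold pf_numer in Hnum.
  rewrite (sumR_single _ N j Hj) in Hnum.
  - apply Rmult_integral in Hnum; destruct Hnum as [He|Hprod]; [exact He|].
    exfalso; revert Hprod; apply prodR_neq0; intros i Hi.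
    destruct (Nat.eqb_spec i j) as [->|Hij]; [lra|].
    intros Hz; apply Hij, Hinj; auto; lra.
  - intros i Hi Hij; rewrite (prodR_eq0 _ N j Hj); [ring|].
    destruct (Nat.eqb_spec j i); [lia|ring].
Qed.

Lemma partial_fraction_factor a e n :
  (forall k j, (k < n)%nat -> (j <= n)%nat -> INR k + a j <> 0) ->
  (forall k, (k < n)%nat -> sumR (fun j => e j / (INR k + a j)) (S n) = 0) ->
  exists lam, forall s, (forall j, (j <= n)%nat -> s + a j <> 0) ->
    sumR (fun j => e j / (s + a j)) (S n) =
      lam * prodR (fun k => s - INR k) n / prodR (fun j => s + a j) (S n).
Proof.
  intros Hpole H.
  set (R0 := fun x => prodR (fun k => x - INR k) n).
  assert (HR0 : R0 (INR n) <> 0).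
  { apply prodR_neq0; intros k Hk.
    assert (INR k < INR n) by (apply lt_INR; lia); lra. }
  set (lam := pf_numer a e (S n) (INR n) / R0 (INR n)).
  (* [pf_numer - lam R0] has degree at most [n] and vanishes at [0, ..., n]. *)
  assert (Hnum : forall x, pf_numer a e (S n) x - lam * R0 x = 0).
  { apply (ispoly_eq0_of_roots (S n)).
    - apply (ispoly_ext _ (fun x => pf_numer a e (S n) x + - lam * R0 x)); [intros; ring|].
      apply ispoly_plus; [apply ispoly_pf_numer|apply ispoly_scal].
      apply (ispoly_ext _ (fun x => prodR (fun k => x + - INR k) n)); [|apply ispoly_prodR].
      intros x; apply prodR_ext; intros; ring.
    - intros k Hk; destruct (Nat.eq_dec k n) as [->|Hne]; [unfold lam; field; exact HR0|].
      rewrite pf_numer_eq by (intros; apply Hpole; lia); rewrite H by lia.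
      unfold R0; rewrite (prodR_eq0 _ n k) by (lia || ring); ring. }
  exists lam; intros s Hs.
  assert (Hden : prodR (fun j => s + a j) (S n) <> 0) by (apply prodR_neq0; intros; apply Hs; lia).
  specialize (Hnum s); rewrite pf_numer_eq in Hnum by (intros; apply Hs; lia).
  unfold R0 in Hnum; field_simplify_eq; [lra|exact Hden].
Qed.

(** * Moments of coefficient sequences *)

Definition moment (c : nat -> R) (N : nat) (s : R) : R :=
  sumR (fun i => c i / (s + INR i + 1)) N.

Definition altc (c : nat -> R) (i : nat) : R := (-1) ^ i * c i.

(* [c] is supported on the indices [i] with [i = b (mod 2)]. *)
Definition has_parity (b : nat) (c : nat -> R) : Prop :=
  forall i, (-1) ^ i * c i = (-1) ^ b * c i.

Lemma moment_ext c d N s : (forall i, (i < N)%nat -> c i = d i) -> moment c N s = moment d N s.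
Proof. intros H; apply sumR_ext; intros i Hi; rewrite H by exact Hi; reflexivity. Qed.

Lemma moment_plus c d N s :
  moment (fun i => c i + d i) N s = moment c N s + moment d N s.
Proof.
  unfold moment; rewrite <- sumR_plus; apply sumR_ext; intros; unfold Rdiv; ring.
Qed.

Lemma moment_minus c d N s :
  moment (fun i => c i - d i) N s = moment c N s - moment d N s.
Proof.
  unfold moment; rewrite <- sumR_minus; apply sumR_ext; intros; unfold Rdiv; ring.
Qed.

Lemma moment_trunc c N M s :
  (N <= M)%nat -> (forall i, (N <= i)%nat -> c i = 0) -> moment c M s = moment c N s.
Proof.
  intros HNM H; apply sumR_trunc; [exact HNM|]; intros i Hi; rewrite H by exact Hi.
  unfold Rdiv; ring.
Qed.

Lemma pow_m1_sq i : (-1) ^ i * (-1) ^ i = 1.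
Proof. rewrite <- pow_add; replace (i + i)%nat with (2 * i)%nat by lia; apply pow_1_even. Qed.

Lemma altc_altc c i : altc (altc c) i = c i.
Proof. unfold altc; rewrite <- Rmult_assoc, pow_m1_sq; ring. Qed.

Lemma altc_inj c d : (forall i, altc c i = altc d i) -> forall i, c i = d i.
Proof.
  intros H i; rewrite <- (altc_altc c), <- (altc_altc d).
  unfold altc at 1 3; rewrite H; reflexivity.
Qed.

Lemma has_parity0 c : (forall i, altc c i = c i) -> has_parity 0 c.
Proof. intros H i; simpl; rewrite Rmult_1_l; apply H. Qed.

Lemma parity_cases b i :
  (b <= 1)%nat -> (exists j, i = (2 * j + b)%nat) \/ (-1) ^ i = - (-1) ^ b.
Proof.
  intros Hb; destruct (Nat.Even_or_Odd i) as [[j ->]|[j ->]];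
    destruct b as [|[|]]; try lia.
  - left; exists j; lia.
  - right; rewrite pow_1_even; simpl; ring.
  - right; replace (2 * j + 1)%nat with (S (2 * j)) by lia; rewrite pow_1_odd; simpl; ring.
  - left; exists j; lia.
Qed.

Lemma has_parity_vanish b c i : has_parity b c -> (-1) ^ i = - (-1) ^ b -> c i = 0.
Proof.
  intros Hc Hi; specialize (Hc i); rewrite Hi in Hc.
  assert (Hz : (-1) ^ b * c i = 0) by lra.
  apply Rmult_integral in Hz; destruct Hz as [Hz|Hz]; [|exact Hz].
  exfalso; revert Hz; apply pow_nonzero; lra.
Qed.

Lemma moment_parity b c M s : (b <= 1)%nat -> has_parity b c ->
  moment c (2 * M) s = sumR (fun j => c (2 * j + b)%nat / (s + (INR b + 1 + 2 * INR j))) M.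
Proof.
  intros Hb Hc; unfold moment; rewrite sumR_split_parity.
  assert (Hoff : forall i, (-1) ^ i = - (-1) ^ b -> c i / (s + INR i + 1) = 0).
  { intros i Hi; rewrite (has_parity_vanish b c i Hc Hi); unfold Rdiv; ring. }
  assert (Hon : forall j, c (2 * j + b)%nat / (s + INR (2 * j + b) + 1) =
                          c (2 * j + b)%nat / (s + (INR b + 1 + 2 * INR j))).
  { intros j; rewrite plus_INR, mult_INR; simpl (INR 2); f_equal; ring. }
  destruct b as [|[|]]; [| |lia].
  - rewrite (sumR_eq0 (fun j => _ / (s + INR (2 * j + 1) + 1))), Rplus_0_r.
    + apply sumR_ext; intros j _; rewrite <- Hon, Nat.add_0_r; reflexivity.
    + intros j _; apply Hoff; replace (2 * j + 1)%nat with (S (2 * j)) by lia.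
      rewrite pow_1_odd; simpl; ring.
  - rewrite (sumR_eq0 (fun j => _ / (s + INR (2 * j) + 1))), Rplus_0_l.
    + apply sumR_ext; intros j _; rewrite <- Hon; reflexivity.
    + intros j _; apply Hoff; rewrite pow_1_even; simpl; ring.
Qed.

Lemma parity_coef_eq0 b N c : (b <= 1)%nat -> has_parity b c ->
  (forall i, (2 * N <= i)%nat -> c i = 0) ->
  (forall k, (k < N)%nat -> moment c (2 * N) (INR k) = 0) ->
  forall i, c i = 0.
Proof.
  intros Hb Hc Htop Hmom.
  assert (Hlow : forall j, (j < N)%nat -> c (2 * j + b)%nat = 0).
  { apply (partial_fraction_coef_eq0 (fun j => INR b + 1 + 2 * INR j)).
    - intros i j _ _ Hij; apply INR_eq; lra.
    - intros k j _ _; pose proof (pos_INR k); pose proof (pos_INR b); pose proof (pos_INR j); lra.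
    - intros k Hk; rewrite <- (moment_parity b c N (INR k)) by assumption; apply Hmom, Hk. }
  intros i; destruct (parity_cases b i Hb) as [[j ->]|Hi]; [|exact (has_parity_vanish b c i Hc Hi)].
  destruct (Nat.lt_ge_cases j N); [apply Hlow; assumption|apply Htop; lia].
Qed.

Lemma prodR_sub_poch s n : prodR (fun k => s - INR k) n = (-1) ^ n * poch (- s) n.
Proof. induction n as [|n IH]; simpl; [ring|rewrite IH; ring]. Qed.

Lemma poch_half_prodR u s m :
  poch ((u + s) / 2) m * 2 ^ m = prodR (fun j => s + (u + 2 * INR j)) m.
Proof. induction m as [|m IH]; simpl; [ring|rewrite <- IH; field]. Qed.

Lemma parity_moment_factor b n c : (b <= 1)%nat -> has_parity b c ->
  (forall k, (k < n)%nat -> moment c (2 * S n) (INR k) = 0) ->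
  exists C, forall s, s > -1 ->
    moment c (2 * S n) s = C * poch (- s) n / poch ((INR b + 1 + s) / 2) (S n).
Proof.
  intros Hb Hc Hmom.
  assert (Hpos : forall s j, s > -1 -> s + (INR b + 1 + 2 * INR j) > 0).
  { intros s j Hs; pose proof (pos_INR b); pose proof (pos_INR j); lra. }
  destruct (partial_fraction_factor (fun j => INR b + 1 + 2 * INR j)
              (fun j => c (2 * j + b)%nat) n) as [lam Hlam].
  - intros k j _ _; pose proof (pos_INR k); pose proof (Hpos (INR k) j ltac:(lra)); lra.
  - intros k Hk; rewrite <- (moment_parity b) by assumption; apply Hmom, Hk.
  - exists (lam * (-1) ^ n / 2 ^ S n); intros s Hs.
    assert (Hden : poch ((INR b + 1 + s) / 2) (S n) * 2 ^ S n <> 0).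
    { rewrite poch_half_prodR; apply prodR_neq0; intros j _; pose proof (Hpos s j Hs); lra. }
    assert (H2 : 2 ^ S n <> 0) by (apply pow_nonzero; lra).
    rewrite (moment_parity b) by assumption.
    rewrite Hlam by (intros j _; pose proof (Hpos s j Hs); lra).
    rewrite prodR_sub_poch, <- poch_half_prodR; field.
    split; [exact H2|intros Hp; apply Hden; rewrite Hp; ring].
Qed.

(** * Coefficients of the Legendre-Angelesco polynomials *)

(* Coefficient form of the type II conditions: [moment (altc c)] encodes orthogonality on
   [-1, 0] and [moment c] orthogonality on [0, 1]. *)
Definition LA_coef (n m : nat) (c : nat -> R) : Prop :=
  (forall i, (n + m < i)%nat -> c i = 0) /\ c (n + m)%nat = 1 /\
  (forall k, (k < n)%nat -> moment (altc c) (n + m + 1) (INR k) = 0) /\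
  (forall k, (k < m)%nat -> moment c (n + m + 1) (INR k) = 0).

Lemma altc_eq_of_moments N c :
  (forall i, (2 * N < i)%nat -> c i = 0) ->
  (forall k, (k < N)%nat ->
     moment c (2 * N + 1) (INR k) = moment (altc c) (2 * N + 1) (INR k)) ->
  forall i, altc c i = c i.
Proof.
  intros Htop Hmom.
  set (o := fun i => c i - altc c i).
  assert (Hotop : forall i, (2 * N <= i)%nat -> o i = 0).
  { intros i Hi; unfold o, altc.
    destruct (Nat.eq_dec i (2 * N)) as [->|Hne]; [rewrite pow_1_even; ring|].
    rewrite Htop by lia; ring. }
  assert (Ho : forall i, o i = 0).
  { apply (parity_coef_eq0 1 N); [lia| |exact Hotop|].
    - intros i; unfold o; rewrite Rmult_minus_distr_l.
      change ((-1) ^ i * altc c i) with (altc (altc c) i); rewrite altc_altc.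
      unfold altc; simpl; ring.
    - intros k Hk; rewrite <- (moment_trunc o (2 * N) (2 * N + 1)) by (lia || exact Hotop).
      unfold o; rewrite moment_minus, Hmom by exact Hk; ring. }
  intros i; specialize (Ho i); unfold o in Ho; lra.
Qed.

Lemma LA_nn_even n c : LA_coef n n c -> forall i, altc c i = c i.
Proof.
  intros [Htop [_ [Halt Hmom]]].
  apply (altc_eq_of_moments n); [intros i Hi; apply Htop; lia|].
  intros k Hk; replace (2 * n + 1)%nat with (n + n + 1)%nat by lia.
  rewrite Halt, Hmom by exact Hk; reflexivity.
Qed.

Lemma LA_nn_unique n c c' : LA_coef n n c -> LA_coef n n c' -> forall i, c i = c' i.
Proof.
  intros HA HA'; pose proof (LA_nn_even n c HA) as Hev; pose proof (LA_nn_even n c' HA') as Hev'.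
  destruct HA as [Htop [Hlead [_ Hmom]]]; destruct HA' as [Htop' [Hlead' [_ Hmom']]].
  set (d := fun i => c i - c' i).
  assert (Hdtop : forall i, (2 * n <= i)%nat -> d i = 0).
  { intros i Hi; unfold d; destruct (Nat.eq_dec i (2 * n)) as [->|Hne].
    - replace (2 * n)%nat with (n + n)%nat by lia; rewrite Hlead, Hlead'; ring.
    - rewrite Htop, Htop' by lia; ring. }
  assert (Hd : forall i, d i = 0).
  { apply (parity_coef_eq0 0 n); [lia| |exact Hdtop|].
    - apply has_parity0; intros i; unfold d, altc.
      rewrite Rmult_minus_distr_l; fold (altc c i) (altc c' i); rewrite Hev, Hev'; reflexivity.
    - intros k Hk; rewrite <- (moment_trunc d (2 * n) (n + n + 1)) by (lia || exact Hdtop).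
      unfold d; rewrite moment_minus, Hmom, Hmom' by exact Hk; ring. }
  intros i; specialize (Hd i); unfold d in Hd; lra.
Qed.

Lemma LA_nn_moment n c : LA_coef n n c -> exists C, forall s, s > -1 ->
  moment c (n + n + 1) s = C * poch (- s) n / poch (1 / 2 + s / 2) (S n).
Proof.
  intros HA; pose proof (LA_nn_even n c HA) as Hev; destruct HA as [Htop [_ [_ Hmom]]].
  assert (Hlen : forall s, moment c (2 * S n) s = moment c (n + n + 1) s).
  { intros s; apply moment_trunc; [lia|intros i Hi; apply Htop; lia]. }
  destruct (parity_moment_factor 0 n c) as [C HC]; [lia|apply has_parity0, Hev| |].
  - intros k Hk; rewrite Hlen; apply Hmom, Hk.
  - exists C; intros s Hs; rewrite <- Hlen, HC by exact Hs.
    replace ((INR 0 + 1 + s) / 2) with (1 / 2 + s / 2) by (simpl; field); reflexivity.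
Qed.

Lemma LA_pair_rel n c e : LA_coef (S n) n c -> LA_coef n (S n) e ->
  forall i, c i = - altc e i.
Proof.
  intros [Htop [Hlead [Halt Hmom]]] [Htop' [Hlead' [Halt' Hmom']]].
  replace (S n + n)%nat with (S (2 * n)) in Htop, Hlead by lia.
  replace (n + S n)%nat with (S (2 * n)) in Htop', Hlead' by lia.
  replace (S n + n + 1)%nat with (2 * S n)%nat in Halt, Hmom by lia.
  replace (n + S n + 1)%nat with (2 * S n)%nat in Halt', Hmom' by lia.
  (* [d] has degree at most [2n]; as for [P_{n,n}] its odd part vanishes, and then [n+1]
     conditions on its [n+1] even coefficients force [d = 0]. *)
  set (d := fun i => c i + altc e i).
  assert (Hdtop : forall i, (2 * n < i)%nat -> d i = 0).
  { intros i Hi; unfold d, altc; destruct (Nat.eq_dec i (S (2 * n))) as [->|Hne].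
    - rewrite Hlead, Hlead', pow_1_odd; ring.
    - rewrite Htop, Htop' by lia; ring. }
  assert (Hdtop_alt : forall i, (2 * n < i)%nat -> altc d i = 0).
  { intros i Hi; unfold altc at 1; rewrite Hdtop by exact Hi; ring. }
  assert (Hd_mom : forall k, (k < n)%nat -> moment d (2 * S n) (INR k) = 0).
  { intros k Hk; unfold d; rewrite moment_plus, Hmom, Halt' by exact Hk; ring. }
  assert (Hd_alt : forall k, (k < S n)%nat -> moment (altc d) (2 * S n) (INR k) = 0).
  { intros k Hk; rewrite (moment_ext _ (fun i => altc c i + e i)).
    - rewrite moment_plus, Halt, Hmom' by exact Hk; ring.
    - intros i _; unfold d, altc; rewrite Rmult_plus_distr_l, <- Rmult_assoc, pow_m1_sq; ring. }
  assert (Hev : forall i, altc d i = d i).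
  { apply (altc_eq_of_moments n d Hdtop); intros k Hk.
    rewrite <- (moment_trunc d (2 * n + 1) (2 * S n)) by (lia || (intros; apply Hdtop; lia)).
    rewrite <- (moment_trunc (altc d) (2 * n + 1) (2 * S n))
      by (lia || (intros; apply Hdtop_alt; lia)).
    rewrite Hd_mom, Hd_alt by lia; reflexivity. }
  assert (Hd : forall i, d i = 0).
  { apply (parity_coef_eq0 0 (S n)); [lia|apply has_parity0, Hev|intros i Hi; apply Hdtop; lia|].
    intros k Hk; rewrite <- (moment_ext (altc d)) by (intros; apply Hev); apply Hd_alt, Hk. }
  intros i; specialize (Hd i); unfold d in Hd; lra.
Qed.

Lemma LA_pair_moment n c e : LA_coef (S n) n c -> LA_coef n (S n) e ->
  exists D, forall s, s > -1 ->
    moment c (2 * S n) s + moment e (2 * S n) s = D * poch (- s) n / poch (1 + s / 2) (S n).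
Proof.
  intros HA HB; pose proof (LA_pair_rel n c e HA HB) as Hrel.
  destruct HA as [_ [_ [_ Hmom]]]; destruct HB as [_ [_ [_ Hmom']]].
  replace (S n + n + 1)%nat with (2 * S n)%nat in Hmom by lia.
  replace (n + S n + 1)%nat with (2 * S n)%nat in Hmom' by lia.
  destruct (parity_moment_factor 1 n (fun i => c i + e i)) as [D HD]; [lia| | |].
  - intros i; rewrite Hrel; unfold altc.
    replace ((-1) ^ i * (- ((-1) ^ i * e i) + e i))
      with (- ((-1) ^ i * (-1) ^ i) * e i + (-1) ^ i * e i) by ring.
    rewrite pow_m1_sq; simpl; ring.
  - intros k Hk; rewrite moment_plus, Hmom, Hmom' by lia; ring.
  - exists D; intros s Hs; rewrite <- moment_plus, HD by exact Hs.
    replace ((INR 1 + 1 + s) / 2) with (1 + s / 2) by (simpl; field); reflexivity.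
Qed.

Lemma LA_nn_moment_uniform n : exists C, forall c, LA_coef n n c -> forall s, s > -1 ->
  moment c (n + n + 1) s = C * poch (- s) n / poch (1 / 2 + s / 2) (S n).
Proof.
  destruct (classic (exists c0, LA_coef n n c0)) as [[c0 H0]|Hnone].
  - destruct (LA_nn_moment n c0 H0) as [C HC]; exists C; intros c Hc s Hs.
    rewrite (moment_ext c c0) by (intros; apply (LA_nn_unique n); assumption); apply HC, Hs.
  - exists 0; intros c Hc; exfalso; apply Hnone; exists c; exact Hc.
Qed.

Lemma LA_pair_moment_uniform n : exists D, forall c e,
  LA_coef (S n) n c -> LA_coef n (S n) e -> forall s, s > -1 ->
    moment c (2 * S n) s + moment e (2 * S n) s = D * poch (- s) n / poch (1 + s / 2) (S n).
Proof.
  destruct (classic (exists c0 e0, LA_coef (S n) n c0 /\ LA_coef n (S n) e0))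
    as [[c0 [e0 [Hc0 He0]]]|Hnone].
  - destruct (LA_pair_moment n c0 e0 Hc0 He0) as [D HD]; exists D; intros c e Hc He s Hs.
    rewrite (moment_ext c c0), (moment_ext e e0); [apply HD, Hs| |].
    + intros i _; apply (altc_inj e e0); intros j.
      rewrite <- (Ropp_involutive (altc e j)), <- (LA_pair_rel n c0 e Hc0 He).
      rewrite (LA_pair_rel n c0 e0 Hc0 He0); ring.
    + intros i _; rewrite (LA_pair_rel n c e0 Hc He0), (LA_pair_rel n c0 e0 Hc0 He0); reflexivity.
  - exists 0; intros c e Hc He; exfalso; apply Hnone; exists c, e; split; assumption.
Qed.

(** * Integrals of polynomials against powers *)

Definition coef (p : list R) (i : nat) : R := nth i p 0.

Lemma coef_ladd p q i : coef (ladd p q) i = coef p i + coef q i.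
Proof.
  revert q i; induction p as [|a p IH]; intros [|b q] [|i]; unfold coef in *; simpl; try ring.
  apply IH.
Qed.

Lemma peval_sumR p x : peval p x = sumR (fun i => coef p i * x ^ i) (length p).
Proof.
  induction p as [|a p IH]; [reflexivity|].
  change (length (a :: p)) with (S (length p)); rewrite sumR_shift.
  change (peval (a :: p) x) with (a + x * peval p x).
  rewrite IH, Rmult_comm, <- sumR_mult_r.
  unfold coef; simpl; f_equal; [ring|apply sumR_ext; intros; ring].
Qed.

Lemma last_coef p : p <> nil -> last p 0 = coef p (length p - 1).
Proof.
  induction p as [|a [|b p] IH]; intros Hp; [congruence|reflexivity|].
  change (last (a :: b :: p) 0) with (last (b :: p) 0); rewrite IH by congruence.
  unfold coef; simpl; rewrite Nat.sub_0_r; reflexivity.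
Qed.

Lemma IntegralIs_is_RInt f a b L l : IntegralIs f a b L -> is_RInt f a b l -> L = l.
Proof. intros [pr <-] H; rewrite <- RInt_Reals; apply is_RInt_unique, H. Qed.

Lemma is_RInt_sumR (f : nat -> R -> R) (l : nat -> R) a b N :
  (forall i, (i < N)%nat -> is_RInt (f i) a b (l i)) ->
  is_RInt (fun x => sumR (fun i => f i x) N) a b (sumR l N).
Proof.
  induction N as [|N IH]; intros H; simpl.
  - pose proof (@is_RInt_const R_NormedModule a b 0) as H0.
    replace (scal (b - a) (0 : R_NormedModule)) with 0 in H0
      by (unfold scal; simpl; unfold mult; simpl; ring).
    exact H0.
  - apply (is_RInt_plus (V := R_NormedModule)); [apply IH; intros|]; apply H; lia.
Qed.

Lemma is_RInt_pow m a b : is_RInt (fun x => x ^ m) a b ((b ^ S m - a ^ S m) / INR (S m)).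
Proof.
  assert (Hm : INR (S m) <> 0) by (apply not_0_INR; lia).
  replace ((b ^ S m - a ^ S m) / INR (S m)) with (minus (b ^ S m / INR (S m)) (a ^ S m / INR (S m)))
    by (unfold minus, plus, opp; simpl; field; exact Hm).
  apply (is_RInt_derive (fun x => x ^ S m / INR (S m))).
  - intros x _; auto_derive; [exact I|].
    change (match m with 0%nat => 1 | S _ => INR m + 1 end) with (INR (S m)); field; exact Hm.
  - intros x _; apply (ex_derive_continuous (fun y => y ^ m)); auto_derive; exact I.
Qed.

Lemma is_RInt_Rpower r a b : r + 1 <> 0 -> 0 < a -> 0 < b ->
  is_RInt (fun x => Rpower x r) a b ((Rpower b (r + 1) - Rpower a (r + 1)) / (r + 1)).
Proof.
  intros Hr Ha Hb.
  assert (Hpos : forall x, Rmin a b <= x <= Rmax a b -> 0 < x).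
  { intros x Hx; pose proof (Rmin_glb_lt a b 0 Ha Hb); lra. }
  replace ((Rpower b (r + 1) - Rpower a (r + 1)) / (r + 1))
    with (minus (Rpower b (r + 1) / (r + 1)) (Rpower a (r + 1) / (r + 1)))
    by (unfold minus, plus, opp; simpl; field; exact Hr).
  apply (is_RInt_derive (fun x => Rpower x (r + 1) / (r + 1))).
  - intros x Hx; apply is_derive_Reals.
    replace (Rpower x r) with ((r + 1) * Rpower x (r + 1 - 1) / (r + 1))
      by (replace (r + 1 - 1) with r by ring; field; exact Hr).
    apply derivable_pt_lim_div_scal, derivable_pt_lim_power, Hpos, Hx.
  - intros x Hx; apply (ex_derive_continuous (fun y => Rpower y r)).
    eexists; apply is_derive_Reals, derivable_pt_lim_power, Hpos, Hx.
Qed.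

Lemma is_RInt_peval_pow p k a b :
  is_RInt (fun x => peval p x * x ^ k) a b
    (sumR (fun i => coef p i * ((b ^ S (i + k) - a ^ S (i + k)) / INR (S (i + k)))) (length p)).
Proof.
  apply (is_RInt_ext (fun x => sumR (fun i => coef p i * x ^ (i + k)) (length p))).
  - intros x _; rewrite peval_sumR, <- sumR_mult_r.
    apply sumR_ext; intros i _; rewrite pow_add; ring.
  - apply (is_RInt_sumR (fun i x => coef p i * x ^ (i + k))); intros i _.
    apply (is_RInt_scal (V := R_NormedModule)), is_RInt_pow.
Qed.

Lemma INR_S_add i k : INR (S (i + k)) = INR k + INR i + 1.
Proof. rewrite S_INR, plus_INR; ring. Qed.

Lemma moment_eq0_of_orth01 p k :
  IntegralIs (fun x => peval p x * x ^ k) 0 1 0 -> moment (coef p) (length p) (INR k) = 0.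
Proof.
  intros H; rewrite (IntegralIs_is_RInt _ _ _ _ _ H (is_RInt_peval_pow p k 0 1)).
  apply sumR_ext; intros i _.
  rewrite pow1, pow_i, INR_S_add by lia; unfold Rdiv; ring.
Qed.

Lemma moment_eq0_of_orth10 p k :
  IntegralIs (fun x => peval p x * x ^ k) (-1) 0 0 -> moment (altc (coef p)) (length p) (INR k) = 0.
Proof.
  intros H; pose proof (IntegralIs_is_RInt _ _ _ _ _ H (is_RInt_peval_pow p k (-1) 0)) as Hval.
  replace (sumR _ (length p)) with (moment (altc (coef p)) (length p) (INR k) * (-1) ^ k) in Hval.
  - symmetry in Hval; apply Rmult_integral in Hval; destruct Hval as [Hm|Hm]; [exact Hm|].
    exfalso; revert Hm; apply pow_nonzero; lra.
  - unfold moment; rewrite <- sumR_mult_r; apply sumR_ext; intros i _.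
    rewrite pow_i, INR_S_add by lia; simpl pow; rewrite pow_add.
    unfold altc, Rdiv; ring.
Qed.

Lemma is_LA_coef n m p : is_LA n m p -> LA_coef n m (coef p).
Proof.
  intros [Hlen [Hlast [Horth10 Horth01]]]; repeat split.
  - intros i Hi; apply nth_overflow; lia.
  - rewrite last_coef, Hlen in Hlast by (intros ->; simpl in Hlen; lia).
    replace (n + m + 1 - 1)%nat with (n + m)%nat in Hlast by lia; exact Hlast.
  - intros k Hk; rewrite <- Hlen; apply moment_eq0_of_orth10, Horth10, Hk.
  - intros k Hk; rewrite <- Hlen; apply moment_eq0_of_orth01, Horth01, Hk.
Qed.

Lemma Rpower_one_l y : Rpower 1 y = 1.
Proof. unfold Rpower; rewrite ln_1, Rmult_0_r; apply exp_0. Qed.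

Lemma Rpower_pos x y : 0 < Rpower x y.
Proof. apply exp_pos. Qed.

Lemma Rpower_small r K eps : 0 < r -> 0 < eps ->
  exists delta, 0 < delta /\ forall e, 0 < e < delta -> K * Rpower e r < eps.
Proof.
  intros Hr Heps; pose proof (Rabs_pos K) as HK.
  set (bound := eps / (Rabs K + 1)).
  assert (Hbound : 0 < bound) by (apply Rdiv_lt_0_compat; lra).
  exists (Rpower bound (/ r)); split; [apply Rpower_pos|intros e He].
  assert (Hlt : Rpower e r < bound).
  { rewrite <- (Rpower_1 bound Hbound), <- (Rinv_l r) by lra; rewrite <- Rpower_mult.
    apply Rlt_Rpower_l; [exact Hr|split; [apply He|apply He]]. }
  pose proof (Rpower_pos e r); pose proof (Rle_abs K).
  apply Rle_lt_trans with (Rabs K * bound); [nra|].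
  unfold bound; apply (Rmult_lt_reg_r (Rabs K + 1)); [lra|].
  field_simplify; [nra|lra].
Qed.

Lemma is_RInt_peval_Rpower p s e : s > -1 -> 0 < e ->
  is_RInt (fun x => peval p x * Rpower x s) e 1
    (moment (coef p) (length p) s -
     sumR (fun i => coef p i * Rpower e (s + INR i + 1) / (s + INR i + 1)) (length p)).
Proof.
  intros Hs He.
  apply (is_RInt_ext (fun x => sumR (fun i => coef p i * Rpower x (s + INR i)) (length p))).
  - intros x Hx; pose proof (Rmin_glb_lt e 1 0 He Rlt_0_1).
    rewrite peval_sumR, <- sumR_mult_r; apply sumR_ext; intros i _.
    rewrite Rpower_plus, Rpower_pow by lra; ring.
  - replace (moment _ _ _ - _) with (sumR (fun i => coef p i *
        ((Rpower 1 (s + INR i + 1) - Rpower e (s + INR i + 1)) / (s + INR i + 1))) (length p)).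
    + apply (is_RInt_sumR (fun i x => coef p i * Rpower x (s + INR i))); intros i _.
      apply (is_RInt_scal (V := R_NormedModule)), is_RInt_Rpower; [|exact He|lra].
      pose proof (pos_INR i); lra.
    + unfold moment; rewrite <- sumR_minus; apply sumR_ext; intros i _.
      rewrite Rpower_one_l; unfold Rdiv; ring.
Qed.

Lemma Rpower_tail_bound p s e : s > -1 -> 0 < e <= 1 ->
  Rabs (sumR (fun i => coef p i * Rpower e (s + INR i + 1) / (s + INR i + 1)) (length p)) <=
    sumR (fun i => Rabs (coef p i) / (s + INR i + 1)) (length p) * Rpower e (s + 1).
Proof.
  intros Hs He; rewrite <- sumR_mult_r; apply sumR_abs_le; intros i _.
  assert (Hd : 0 < s + INR i + 1) by (pose proof (pos_INR i); lra).
  assert (Hsplit : Rpower e (s + INR i + 1) = Rpower e (s + 1) * e ^ i).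
  { rewrite <- Rpower_pow, <- Rpower_plus by lra; f_equal; ring. }
  assert (Hei : 0 <= e ^ i <= 1)
    by (split; [apply pow_le; lra|rewrite <- (pow1 i); apply pow_incr; lra]).
  pose proof (Rpower_pos e (s + 1)) as HP; pose proof (Rabs_pos (coef p i)) as Hc.
  rewrite Hsplit; unfold Rdiv; rewrite !Rabs_mult, Rabs_inv, (Rabs_pos_eq (s + INR i + 1)),
    (Rabs_pos_eq (Rpower e (s + 1))), (Rabs_pos_eq (e ^ i)) by lra.
  pose proof (Rinv_0_lt_compat _ Hd).
  assert (0 <= Rabs (coef p i) * / (s + INR i + 1) * Rpower e (s + 1)) by
    (apply Rmult_le_pos; [apply Rmult_le_pos|]; lra).
  nra.
Qed.

Lemma improper_peval_Rpower p s : s > -1 ->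
  ImproperIntegralIs (fun x => peval p x * Rpower x s) 0 1 (moment (coef p) (length p) s).
Proof.
  intros Hs; split.
  - intros e He; constructor; apply ex_RInt_Reals_0; eexists; apply is_RInt_peval_Rpower; lra.
  - intros eps Heps.
    destruct (Rpower_small (s + 1)
                (sumR (fun i => Rabs (coef p i) / (s + INR i + 1)) (length p)) eps)
      as [delta [Hdelta Hsmall]]; [lra|exact Heps|].
    exists delta; split; [exact Hdelta|]; intros e He He1 pr.
    rewrite <- RInt_Reals, (is_RInt_unique _ _ _ _ (is_RInt_peval_Rpower p s e Hs ltac:(lra))).
    match goal with |- Rabs (?m - ?t - ?m) < _ => replace (m - t - m) with (- t) by ring end.
    rewrite Rabs_Ropp; eapply Rle_lt_trans; [apply Rpower_tail_bound; lra|apply Hsmall; lra].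
Qed.

Theorem mainTheorem10 :
  forall n : nat, exists Cn Dn : R,
    forall s : R, s > -1 ->
      (forall p : list R, is_LA n n p ->
         ImproperIntegralIs (fun x => peval p x * Rpower x s) 0 1
           (Cn * poch (- s) n / poch (1/2 + s/2) (S n))) /\
      (forall p q : list R, is_LA (S n) n p -> is_LA n (S n) q ->
         ImproperIntegralIs (fun x => (peval p x + peval q x) * Rpower x s) 0 1
           (Dn * poch (- s) n / poch (1 + s/2) (S n))).
Proof.
  intros n.
  destruct (LA_nn_moment_uniform n) as [C HC]; destruct (LA_pair_moment_uniform n) as [D HD].
  exists C, D; intros s Hs; split.
  - intros p Hp; pose proof (improper_peval_Rpower p s Hs) as HI.
    rewrite (proj1 Hp), (HC _ (is_LA_coef n n p Hp) s Hs) in HI; exact HI.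
  - intros p q Hp Hq; pose proof (improper_peval_Rpower (ladd p q) s Hs) as HI.
    rewrite length_ladd, (proj1 Hp), (proj1 Hq) in HI.
    replace (Nat.max _ _) with (2 * S n)%nat in HI by lia.
    rewrite (moment_ext _ (fun i => coef p i + coef q i)), moment_plus in HI
      by (intros; apply coef_ladd).
    rewrite (HD _ _ (is_LA_coef _ _ _ Hp) (is_LA_coef _ _ _ Hq) s Hs) in HI.
    replace (fun x => (peval p x + peval q x) * Rpower x s)
      with (fun x => peval (ladd p q) x * Rpower x s)
      by (apply functional_extensionality; intros x; rewrite peval_ladd; reflexivity).
    exact HI.
Qed.
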